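(* Let $\epsilon>0$ and let $\gamma$ be an arclength-parameterized curve in $\mathbb{R}^3$ whose curvature is bounded by $1$, contained in the intersection of two orthogonal slabs of width $\epsilon$, each of which contains the $y$-axis. Then $|\langle T, v\rangle| < 3\sqrt{\epsilon}$ at every point of $\gamma$, where $T$ is the unit tangent vector of $\gamma$ and $v$ is any unit vector perpendicular to $e_2$.
   Context: $e_2$ denotes the unit vector in the direction of the $y$-axis in $\mathbb{R}^3$ with coordinates $(x,y,z)$. A slab of width $\epsilon$ is the closed region between two parallel affine planes at distance $\epsilon$ apart. *)

From Stdlib Require Import Reals.
From Coquelicot Require Import Coquelicot.
Open Scope R_scope.

Record vec3 : Type := V3 { vx : R; vy : R; vz : R }.

Definition dot3 (u w : vec3) : R := vx u * vx w + vy u * vy w + vz u * vz w.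
Definition norm3 (u : vec3) : R := sqrt (dot3 u u).

Definition e2 : vec3 := V3 0 1 0.

Definition has_deriv3 (f g : R -> vec3) : Prop :=
  forall t, is_derive (fun s => vx (f s)) t (vx (g t))
         /\ is_derive (fun s => vy (f s)) t (vy (g t))
         /\ is_derive (fun s => vz (f s)) t (vz (g t)).

(* Closed slab of width eps: region between the parallel planes
   <n,p> = c and <n,p> = c + eps, n a unit normal. *)
Definition in_slab (n : vec3) (c eps : R) (p : vec3) : Prop :=
  c <= dot3 n p <= c + eps.

Definition slab_contains_y_axis (n : vec3) (c eps : R) : Prop :=
  forall y : R, in_slab n c eps (V3 0 y 0).

(** A bounded real function with bounded second derivative has small first derivative:
    if [|f''| <= 1] and [f] stays in an interval of length [eps], then [f'(t)^2 <= 2 eps],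
    since otherwise following the tangent for time [|f'(t)|] would move [f] by at least
    [f'(t)^2 / 2].  Applied to [<n, gamma>] for the two slab normals, this bounds the
    components of [T] along [n1] and [n2] by [sqrt (2 eps)].  The normals are orthogonal
    to [e2], so they form an orthonormal basis of the [xz]-plane which contains [v];
    hence [<T, v>] is a combination of these two components with coefficients
    [<v, n1>], [<v, n2>] of square sum [1], and Cauchy-Schwarz gives
    [<T, v>^2 <= 4 eps < 9 eps]. *)

From Stdlib Require Import Reals Lra Psatz.
From Coquelicot Require Import Coquelicot.
Open Scope R_scope.

Lemma is_derive_nonneg_le (p dp : R -> R) (a b : R) :
  a <= b -> (forall x, is_derive p x (dp x)) ->
  (forall x, a <= x <= b -> 0 <= dp x) -> p a <= p b.
Proof.
  intros Hab Hp Hdp.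
  destruct (MVT_gen p a b dp) as [c [Hc Heq]].
  - intros x _; apply Hp.
  - intros x _; apply continuity_pt_filterlim.
    apply (ex_derive_continuous (V := R_NormedModule)); eexists; apply Hp.
  - rewrite Rmin_left, Rmax_right in Hc by lra.
    assert (0 <= dp c * (b - a)) by (apply Rmult_le_pos; [apply Hdp|]; lra).
    lra.
Qed.

Lemma second_order_lower_bound (f g h : R -> R) (t s : R) :
  (forall x, is_derive f x (g x)) -> (forall x, is_derive g x (h x)) ->
  (forall x, -1 <= h x) -> 0 <= s ->
  f t + g t * s - s * s / 2 <= f (t + s).
Proof.
  intros Hf Hg Hh Hs.
  assert (g_lower : forall x, t <= x -> g t - (x - t) <= g x).
  { intros x Hx.
    enough (g t + t <= g x + x) by lra.
    apply (is_derive_nonneg_le (fun y => g y + y) (fun y => h y + 1)); auto.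
    - intro y; auto_derive; [eexists; apply Hg | ].
      replace (Derive (fun x => g x) y) with (h y) by (symmetry; apply is_derive_unique, Hg).
      ring.
    - intros y _; specialize (Hh y); lra. }
  enough (f t - g t * t <= f (t + s) - g t * (t + s) + (t + s - t) * (t + s - t) / 2)
    by lra.
  replace (f t - g t * t) with (f t - g t * t + (t - t) * (t - t) / 2) by field.
  apply (is_derive_nonneg_le (fun y => f y - g t * y + (y - t) * (y - t) / 2)
                             (fun y => g y - g t + (y - t))); [lra | |].
  - intro y; auto_derive; [eexists; apply Hf | ].
    replace (Derive (fun x => f x) y) with (g y) by (symmetry; apply is_derive_unique, Hf).
    field.
  - intros y Hy; specialize (g_lower y ltac:(lra)); lra.
Qed.

Lemma bounded_deriv_sq_le (f g h : R -> R) (c eps t : R) :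
  (forall x, is_derive f x (g x)) -> (forall x, is_derive g x (h x)) ->
  (forall x, Rabs (h x) <= 1) -> (forall x, c <= f x <= c + eps) ->
  g t * g t <= 2 * eps.
Proof.
  assert (nonneg_case : forall (f g h : R -> R) c,
    (forall x, is_derive f x (g x)) -> (forall x, is_derive g x (h x)) ->
    (forall x, -1 <= h x) -> (forall x, c <= f x <= c + eps) ->
    0 <= g t -> g t * g t <= 2 * eps).
  { intros f' g' h' c' Hf Hg Hh Hb Hpos.
    pose proof (second_order_lower_bound f' g' h' t (g' t) Hf Hg Hh Hpos).
    pose proof (Hb t); pose proof (Hb (t + g' t)); lra. }
  intros Hf Hg Hh Hb.
  assert (Hh' : forall x, -1 <= h x <= 1) by (intro x; apply Rabs_le_between, Hh).
  destruct (Rle_or_lt 0 (g t)) as [Hpos | Hneg].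
  - apply (nonneg_case f g h c); auto; intro x; apply Hh'.
  - replace (g t * g t) with (- g t * - g t) by ring.
    apply (nonneg_case (fun x => - f x) (fun x => - g x) (fun x => - h x) (- c - eps)).
    + intro x; apply (is_derive_opp f), Hf.
    + intro x; apply (is_derive_opp g), Hg.
    + intro x; specialize (Hh' x); lra.
    + intro x; specialize (Hb x); lra.
    + lra.
Qed.

Lemma dot3_self_nonneg (u : vec3) : 0 <= dot3 u u.
Proof. unfold dot3; nra. Qed.

Lemma dot3_self_norm3 (u : vec3) : dot3 u u = norm3 u * norm3 u.
Proof. unfold norm3; rewrite sqrt_sqrt; [reflexivity | apply dot3_self_nonneg]. Qed.

Lemma dot3_sq_le (u w : vec3) : dot3 u w * dot3 u w <= dot3 u u * dot3 w w.
Proof.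
  destruct u as [a b c], w as [p q r]; unfold dot3; simpl.
  assert (lagrange : (a * a + b * b + c * c) * (p * p + q * q + r * r)
    - (a * p + b * q + c * r) * (a * p + b * q + c * r)
    = (a * q - b * p) ^ 2 + (a * r - c * p) ^ 2 + (b * r - c * q) ^ 2) by ring.
  assert (0 <= (a * q - b * p) ^ 2 + (a * r - c * p) ^ 2 + (b * r - c * q) ^ 2)
    by (repeat apply Rplus_le_le_0_compat; apply pow2_ge_0).
  lra.
Qed.

Lemma is_derive_dot3 (F G : R -> vec3) (n : vec3) (t : R) :
  has_deriv3 F G -> is_derive (fun s => dot3 n (F s)) t (dot3 n (G t)).
Proof.
  intro H; destruct (H t) as [Hx [Hy Hz]]; unfold dot3.
  apply (is_derive_plus (fun s => vx n * vx (F s) + vy n * vy (F s))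
                        (fun s => vz n * vz (F s)));
    [apply (is_derive_plus (fun s => vx n * vx (F s)) (fun s => vy n * vy (F s))) |];
    apply is_derive_scal; assumption.
Qed.

Lemma dot2_sq_le (a b x y : R) :
  (a * x + b * y) * (a * x + b * y) <= (a * a + b * b) * (x * x + y * y).
Proof.
  assert (lagrange : (a * a + b * b) * (x * x + y * y) - (a * x + b * y) * (a * x + b * y)
                     = (a * y - b * x) ^ 2) by ring.
  pose proof (pow2_ge_0 (a * y - b * x)); lra.
Qed.

Lemma Rabs_lt_mul_sqrt (x k e : R) :
  0 <= k -> 0 <= e -> x * x < k * k * e -> Rabs x < k * sqrt e.
Proof.
  intros Hk He Hx.
  pose proof (sqrt_pos e); pose proof (sqrt_sqrt e He).
  rewrite <- (Rabs_pos_eq (k * sqrt e)) by nra.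
  apply Rsqr_lt_abs_0; unfold Rsqr; nra.
Qed.

Lemma slab_contains_y_axis_vy (n : vec3) (c eps : R) :
  slab_contains_y_axis n c eps -> vy n = 0.
Proof.
  unfold slab_contains_y_axis, in_slab, dot3; simpl; intro H.
  destruct (Req_dec (vy n) 0) as [| Hn]; [assumption | exfalso].
  destruct (H 0) as [H0 _].
  destruct (H ((Rabs c + eps + 1) / vy n)) as [_ H1].
  replace (vy n * ((Rabs c + eps + 1) / vy n)) with (Rabs c + eps + 1) in H1
    by (field; assumption).
  pose proof (Rle_abs c); lra.
Qed.

(* The columns of a matrix with orthonormal rows [(p, q)], [(r, s)] are orthonormal
   too, since [r = - d q] and [s = d p] with [d = p s - q r = +-1]. *)
Lemma orthonormal2_dot (p q r s x z x' z' : R) :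
  p * p + q * q = 1 -> r * r + s * s = 1 -> p * r + q * s = 0 ->
  x * x' + z * z'
  = (p * x + q * z) * (p * x' + q * z') + (r * x + s * z) * (r * x' + s * z').
Proof.
  intros Hpq Hrs Hort.
  set (d := p * s - q * r).
  assert (Er : r = - d * q).
  { unfold d; replace (- (p * s - q * r) * q) with (r * (p * p + q * q) - p * (p * r + q * s))
      by ring; rewrite Hpq, Hort; ring. }
  assert (Es : s = d * p).
  { unfold d; replace ((p * s - q * r) * p) with (s * (p * p + q * q) - q * (p * r + q * s))
      by ring; rewrite Hpq, Hort; ring. }
  assert (Hd : d * d = 1).
  { replace (d * d) with ((p * p + q * q) * (r * r + s * s) - (p * r + q * s) * (p * r + q * s))
      by (unfold d; ring); rewrite Hpq, Hrs, Hort; ring. }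
  rewrite Er, Es.
  transitivity ((x * x' + z * z') * (p * p + q * q)
                + (d * d - 1) * (p * z - q * x) * (p * z' - q * x'));
    [rewrite Hpq, Hd; ring | ring].
Qed.

Lemma dot3_orthonormal_xz (n1 n2 u w : vec3) :
  dot3 n1 n1 = 1 -> dot3 n2 n2 = 1 -> dot3 n1 n2 = 0 ->
  vy n1 = 0 -> vy n2 = 0 -> vy w = 0 ->
  dot3 u w = dot3 n1 u * dot3 n1 w + dot3 n2 u * dot3 n2 w.
Proof.
  destruct n1 as [p y1 q], n2 as [r y2 s], u as [x y z], w as [x' y' z'].
  unfold dot3; simpl; intros H1 H2 H12 -> -> ->.
  pose proof (orthonormal2_dot p q r s x z x' z' ltac:(lra) ltac:(lra) ltac:(lra)).
  lra.
Qed.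

Lemma slab_tangent_sq_le (gamma T K : R -> vec3) (n : vec3) (c eps t : R) :
  has_deriv3 gamma T -> has_deriv3 T K -> (forall s, norm3 (K s) <= 1) ->
  norm3 n = 1 -> (forall s, in_slab n c eps (gamma s)) ->
  dot3 n (T t) * dot3 n (T t) <= 2 * eps.
Proof.
  intros Hg HT HK Hn Hs.
  apply (bounded_deriv_sq_le (fun s => dot3 n (gamma s)) (fun s => dot3 n (T s))
           (fun s => dot3 n (K s)) c); [intro x; apply is_derive_dot3; assumption .. | |].
  - intro x; apply Rabs_le_between.
    pose proof (dot3_sq_le n (K x)) as CS; rewrite !dot3_self_norm3, Hn in CS.
    pose proof (HK x); pose proof (sqrt_pos (dot3 (K x) (K x))); fold (norm3 (K x)) in *.
    nra.
  - exact Hs.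
Qed.

Theorem lemma2p5
  (eps : R) (gamma T K : R -> vec3)
  (n1 n2 : vec3) (c1 c2 : R) (v : vec3) (t : R) :
  0 < eps ->
  has_deriv3 gamma T ->
  (forall s, norm3 (T s) = 1) ->
  has_deriv3 T K ->
  (forall s, norm3 (K s) <= 1) ->
  norm3 n1 = 1 -> norm3 n2 = 1 -> dot3 n1 n2 = 0 ->
  slab_contains_y_axis n1 c1 eps ->
  slab_contains_y_axis n2 c2 eps ->
  (forall s, in_slab n1 c1 eps (gamma s) /\ in_slab n2 c2 eps (gamma s)) ->
  norm3 v = 1 -> dot3 v e2 = 0 ->
  Rabs (dot3 (T t) v) < 3 * sqrt eps.
Proof.
  intros Heps Hg _ Hk HK Hn1 Hn2 H12 S1 S2 Hin Hv Hve.
  pose proof (slab_tangent_sq_le gamma T K n1 c1 eps t Hg Hk HK Hn1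
                (fun s => proj1 (Hin s))) as B1.
  pose proof (slab_tangent_sq_le gamma T K n2 c2 eps t Hg Hk HK Hn2
                (fun s => proj2 (Hin s))) as B2.
  assert (N1 : dot3 n1 n1 = 1) by (rewrite dot3_self_norm3, Hn1; ring).
  assert (N2 : dot3 n2 n2 = 1) by (rewrite dot3_self_norm3, Hn2; ring).
  assert (Nv : dot3 v v = 1) by (rewrite dot3_self_norm3, Hv; ring).
  assert (Yv : vy v = 0) by (unfold dot3, e2 in Hve; simpl in Hve; lra).
  pose proof (slab_contains_y_axis_vy n1 c1 eps S1) as Y1.
  pose proof (slab_contains_y_axis_vy n2 c2 eps S2) as Y2.
  rewrite (dot3_orthonormal_xz n1 n2 v v) in Nv by assumption.
  rewrite (dot3_orthonormal_xz n1 n2 (T t) v) by assumption.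
  apply Rabs_lt_mul_sqrt; [lra | lra |].
  eapply Rle_lt_trans; [apply dot2_sq_le |].
  rewrite Nv; lra.
Qed.
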